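(* Let $f:\mathbb F_2^5\to\mathbb F_2$ be $f(x_1,\dots,x_5)=x_1\oplus x_5\oplus x_3(x_2\oplus x_4\oplus x_5)$. Let $r,m$ be even, $n=r+m$, let $a,h_1,h_2:\mathbb F_2^r\to\mathbb F_2$ and $g_1,g_2:\mathbb F_2^m\to\mathbb F_2$, and define $\mathfrak f(x,y)=f(a(x),h_1(x),h_2(x),g_1(y),g_2(y))$ for $(x,y)\in\mathbb F_2^r\times\mathbb F_2^m$. (i) If the four functions $a\oplus c_1h_1\oplus c_2h_2$, $(c_1,c_2)\in\mathbb F_2^2$, are all bent and $g_1,g_2$ are bent, then $W_{\mathfrak f}(u,v)\in\{0,\pm2^{n/2},\pm2^{(n+2)/2}\}$ for all $(u,v)$. (ii) Let $r\ge6$. If $a$ is $4$-plateaued, $a\oplus c_1h_1\oplus c_2h_2$ is $2$-plateaued for every $(c_1,c_2)\ne(0,0)$, the four functions $a\oplus c_1h_1\oplus c_2h_2$, $(c_1,c_2)\in\mathbb F_2^2$, have pairwise disjoint Walsh supports, and $g_1,g_2$ are bent, then $W_{\mathfrak f}(u,v)\in\{0,\pm2^{n/2},\pm2^{(n+2)/2}\}$ for all $(u,v)$.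
   Context: $W_h(\omega)=\sum_x(-1)^{h(x)\oplus\omega\cdot x}$, Walsh support $S_h=\{\omega:W_h(\omega)\ne0\}$. For even $m$, $g$ is bent if $|W_g(\omega)|=2^{m/2}$ for all $\omega$. A function $h$ on $\mathbb F_2^r$ is $s$-plateaued if $W_h(\omega)\in\{0,\pm2^{(r+s)/2}\}$ for all $\omega$. *)

(* F_2 is modelled by bool (xor = addition, && = product);
   F_2^k is {ffun 'I_k -> bool}. Walsh values are integers. *)
From mathcomp Require Import all_boot all_order all_algebra.
Set Implicit Arguments. Unset Strict Implicit. Unset Printing Implicit Defensive.
Import GRing.Theory Num.Theory.
Local Open Scope ring_scope.

Definition vec (k : nat) := {ffun 'I_k -> bool}.

Definition dotp (k : nat) (w x : vec k) : bool :=
  \big[xorb/false]_(i < k) (w i && x i).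

Definition sgnb (b : bool) : int := if b then -1 else 1.

Definition walsh (k : nat) (h : vec k -> bool) (w : vec k) : int :=
  \sum_(x : vec k) sgnb (xorb (h x) (dotp w x)).

Definition walsh2 (r m : nat) (F : vec r -> vec m -> bool) (u : vec r) (v : vec m) : int :=
  \sum_(x : vec r) \sum_(y : vec m) sgnb (xorb (F x y) (xorb (dotp u x) (dotp v y))).

Definition wsupp (k : nat) (h : vec k -> bool) : {set vec k} :=
  [set w | walsh h w != 0].

Definition bent (k : nat) (h : vec k -> bool) : Prop :=
  forall w, `|walsh h w| = (2 ^ (k %/ 2))%:Z.

(* s-plateaued: W_h(w) in {0, +-2^((k+s)/2)} for all w (used with k+s even) *)
Definition plateaued (k s : nat) (h : vec k -> bool) : Prop :=
  forall w, walsh h w = 0 \/ walsh h w = (2 ^ ((k + s) %/ 2))%:Z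
            \/ walsh h w = - (2 ^ ((k + s) %/ 2))%:Z.

Definition f5 (x1 x2 x3 x4 x5 : bool) : bool :=
  xorb (xorb x1 x5) (x3 && xorb (xorb x2 x4) x5).

Definition comb (r : nat) (a h1 h2 : vec r -> bool) (c1 c2 : bool) : vec r -> bool :=
  fun x => xorb (xorb (a x) (c1 && h1 x)) (c2 && h2 x).

Definition frakf (r m : nat) (a h1 h2 : vec r -> bool) (g1 g2 : vec m -> bool)
  : vec r -> vec m -> bool :=
  fun x y => f5 (a x) (h1 x) (h2 x) (g1 y) (g2 y).

Definition five_valued (n : nat) (W : int) : Prop :=
  W = 0 \/ W = (2 ^ (n %/ 2))%:Z \/ W = - (2 ^ (n %/ 2))%:Z
  \/ W = (2 ^ ((n + 2) %/ 2))%:Z \/ W = - (2 ^ ((n + 2) %/ 2))%:Z.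

(** Writing f(x) = x1 + x5 + x3 (x2 + x4 + x5) and expanding (-1)^f over the
    four values of (x2, x3) gives, for the composite function,
      2 W_frakf(u,v) = (W_{a} + W_{a+h2})(u) W_{g2}(v)
                     + (W_{a+h1} - W_{a+h1+h2})(u) W_{g1}(v).
    In (i) each bracket lies in {0, +-2^(r/2+1)}; in (ii) the disjoint
    supports leave at most one of the four transforms nonzero at u, so one
    bracket vanishes and the other lies in {0, +-2^(r/2+1), +-2^(r/2+2)}. *)
From mathcomp Require Import all_boot all_order all_algebra zify.
Set Implicit Arguments. Unset Strict Implicit. Unset Printing Implicit Defensive.
Import GRing.Theory Num.Theory.
Local Open Scope ring_scope.

Lemma sgnb_frakf_split r m (a h1 h2 : vec r -> bool) (g1 g2 : vec m -> bool)
    x y (b c : bool) :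
  2 * sgnb (xorb (frakf a h1 h2 g1 g2 x y) (xorb b c)) =
    (sgnb (xorb (comb a h1 h2 false false x) b)
       + sgnb (xorb (comb a h1 h2 false true x) b)) * sgnb (xorb (g2 y) c)
  + (sgnb (xorb (comb a h1 h2 true false x) b)
       - sgnb (xorb (comb a h1 h2 true true x) b)) * sgnb (xorb (g1 y) c).
Proof.
rewrite /frakf /comb /f5 /sgnb.
by move: (a x) (h1 x) (h2 x) (g1 y) (g2 y) b c; do 7!case.
Qed.

Lemma walsh2_frakf_split r m (a h1 h2 : vec r -> bool) (g1 g2 : vec m -> bool)
    u v :
  2 * walsh2 (frakf a h1 h2 g1 g2) u v =
    (walsh (comb a h1 h2 false false) u + walsh (comb a h1 h2 false true) u)
      * walsh g2 v
  + (walsh (comb a h1 h2 true false) u - walsh (comb a h1 h2 true true) u)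
      * walsh g1 v.
Proof.
rewrite /walsh2 /walsh -big_split -sumrB !big_distrlr -big_split mulr_sumr.
apply: eq_bigr => x _; rewrite mulr_sumr -big_split; apply: eq_bigr => y _.
exact: sgnb_frakf_split.
Qed.

Lemma comb00 r (a h1 h2 : vec r -> bool) : comb a h1 h2 false false =1 a.
Proof. by move=> x; rewrite /comb; case: (a x). Qed.

Lemma eq_walsh k (h h' : vec k -> bool) : h =1 h' -> walsh h =1 walsh h'.
Proof. by move=> eqh w; apply: eq_bigr => x _; rewrite eqh. Qed.

Lemma walsh_disjoint_supp k (h h' : vec k -> bool) w :
  [disjoint wsupp h & wsupp h'] -> walsh h w = 0 \/ walsh h' w = 0.
Proof.
move=> dis; have [hw | /negbTE hw] := boolP (w \in wsupp h).
  by right; move: (disjointFr dis hw); rewrite inE => /negbFE/eqP.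
by left; move: hw; rewrite inE => /negbFE/eqP.
Qed.

Lemma plateaued_walsh k s (h : vec k -> bool) w :
  plateaued s h -> walsh h w = 0 \/ `|walsh h w| = (2 ^ ((k + s) %/ 2))%:Z.
Proof. by move=> /(_ w); lia. Qed.

Lemma half_addn_even k j : ~~ odd j -> ((k + j) %/ 2 = k %/ 2 + j %/ 2)%N.
Proof. by rewrite -eqb0 -modn2; lia. Qed.

Lemma five_valued_addn r m (W : int) : ~~ odd m ->
  five_valued (r + m) W <->
  let pq := (2 ^ (r %/ 2))%:Z * (2 ^ (m %/ 2))%:Z in
  W = 0 \/ `|W| = pq \/ `|W| = 2 * pq.
Proof.
move=> em; rewrite /five_valued /=.
have -> : ((r + m + 2) %/ 2 = ((r + m) %/ 2).+1)%N by lia.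
rewrite half_addn_even // expnS expnD !PoszM; lia.
Qed.

Lemma plateaued_walsh_even k s (h : vec k -> bool) w :
  plateaued s h -> ~~ odd s ->
  walsh h w = 0 \/ `|walsh h w| = (2 ^ (s %/ 2))%:Z * (2 ^ (k %/ 2))%:Z.
Proof.
by move=> /(plateaued_walsh w) + es; rewrite half_addn_even // expnD PoszM mulrC.
Qed.

Definition split_values (p s t : int) : Prop :=
  ((s = 0 \/ `|s| = 2 * p) /\ (t = 0 \/ `|t| = 2 * p))
  \/ (`|s| = 4 * p /\ t = 0).

Section SplitValues.

Variables (p : int) (w : bool -> bool -> int).
Let s := w false false + w false true.
Let t := w true false - w true true.

Lemma split_values_abs :
  (forall c1 c2, `|w c1 c2| = p) -> split_values p s t.
Proof.
move=> wp; rewrite /split_values /s /t.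
by move: (wp false false) (wp false true) (wp true false) (wp true true); lia.
Qed.

Lemma split_values_disjoint :
  (w false false = 0 \/ `|w false false| = 4 * p) ->
  (forall c1 c2, c1 || c2 -> w c1 c2 = 0 \/ `|w c1 c2| = 2 * p) ->
  (forall c1 c2 d1 d2, (c1, c2) != (d1, d2) -> w c1 c2 = 0 \/ w d1 d2 = 0) ->
  split_values p s t.
Proof.
move=> w00 wp dis; rewrite /split_values /s /t.
have [w00_0 | w00_n] := eqVneq (w false false) 0; last first.
  have other0 c1 c2 : c1 || c2 -> w c1 c2 = 0.
    have := dis false false c1 c2.
    by case: c1 c2 => [] [] // /(_ isT) [w0 | //] _; rewrite w0 eqxx in w00_n.
  right; rewrite (other0 false true) ?(other0 true false) ?(other0 true true) //.
  by rewrite addr0 subrr; split=> //; case: w00 => // w0; rewrite w0 eqxx in w00_n.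
left; rewrite w00_0 add0r; split; first exact: wp false true isT.
have [w10_0 | w11_0] := dis true false true true isT.
  by rewrite w10_0; have := wp true true isT; lia.
by rewrite w11_0; have := wp true false isT; lia.
Qed.

End SplitValues.

Lemma five_values_of_split (W s t g1 g2 p q : int) :
  2 * W = s * g2 + t * g1 -> `|g1| = q -> `|g2| = q -> split_values p s t ->
  W = 0 \/ `|W| = p * q \/ `|W| = 2 * (p * q).
Proof.
move=> E g1q g2q st; move: E.
have [-> | ->] : g1 = q \/ g1 = - q by lia.
all: have [-> | ->] : g2 = q \/ g2 = - q by lia.
all: case: st => [[[-> | s2] [-> | t2]] | [s4 ->]].
all: try have [-> | ->] : s = 2 * p \/ s = - (2 * p) by lia.
all: try have [-> | ->] : t = 2 * p \/ t = - (2 * p) by lia.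
all: try have [-> | ->] : s = 4 * p \/ s = - (4 * p) by lia.
all: nia.
Qed.

Theorem mainTheorem9 (r m : nat) (a h1 h2 : vec r -> bool) (g1 g2 : vec m -> bool) :
  ~~ odd r -> ~~ odd m ->
  ((forall c1 c2 : bool, bent (comb a h1 h2 c1 c2)) -> bent g1 -> bent g2 ->
     forall (u : vec r) (v : vec m),
       five_valued (r + m) (walsh2 (frakf a h1 h2 g1 g2) u v))
  /\
  ((6 <= r)%N ->
   plateaued 4 a ->
   (forall c1 c2 : bool, (c1 || c2) -> plateaued 2 (comb a h1 h2 c1 c2)) ->
   (forall c1 c2 d1 d2 : bool, (c1, c2) != (d1, d2) ->
      [disjoint wsupp (comb a h1 h2 c1 c2) & wsupp (comb a h1 h2 d1 d2)]) ->
   bent g1 -> bent g2 ->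
   forall (u : vec r) (v : vec m),
     five_valued (r + m) (walsh2 (frakf a h1 h2 g1 g2) u v)).
Proof.
move=> _ em; set p := (2 ^ (r %/ 2))%:Z.
pose w u c1 c2 := walsh (comb a h1 h2 c1 c2) u.
have frakf_values u v : bent g1 -> bent g2 ->
    split_values p (w u false false + w u false true) (w u true false - w u true true) ->
    five_valued (r + m) (walsh2 (frakf a h1 h2 g1 g2) u v).
  move=> bg1 bg2 st; apply/five_valued_addn => //=.
  exact: five_values_of_split (walsh2_frakf_split a h1 h2 g1 g2 u v) (bg1 v) (bg2 v) st.
split=> [bent_comb bg1 bg2 u v | _ pa pc dis bg1 bg2 u v]; apply: frakf_values => //.
  exact: split_values_abs (fun c1 c2 => bent_comb c1 c2 u).
apply: split_values_disjoint.
- by rewrite /w (eq_walsh (comb00 a h1 h2)); exact: plateaued_walsh_even u pa isT.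
- by move=> c1 c2 c12; exact: plateaued_walsh_even u (pc _ _ c12) isT.
- by move=> c1 c2 d1 d2 cd; exact: walsh_disjoint_supp u (dis _ _ _ _ cd).
Qed.
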